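(* Let $(E,p,X)$ be an étalé space with $X$ a Boolean space. Let $X^{\ast}$ be the Boolean algebra of compact-open subsets of $X$ (under inclusion) and $E^{\ast}$ the set of compact-open local sections of $E$. Let $\widetilde p\colon E^{\ast}\to X^{\ast}$ be $C\mapsto p(C)$, and for compact-open $A\supseteq B$ in $X$ and $C\in E^{\ast}$ with $p(C)=A$ define $C|^A_B=C\cap p^{-1}(B)$. Then $\widetilde p\colon E^{\ast}\to X^{\ast}$ is a Boolean set.
   Context: A Boolean space is a Hausdorff space with a basis of compact-open sets. An étalé space $(E,p,X)$: topological spaces with a surjective local homeomorphism $p\colon E\to X$. A (open) local section is an open $A\subseteq E$ with $p|_A$ injective. Convention: a ''Boolean algebra'' means a generalized Boolean algebra (relatively complemented distributive lattice with $0$). Presheaf of sets over a meet semilattice $E$: pairwise disjoint sets $X_e$, restriction maps $x\mapsto x|^e_f$ for $e\ge f$ with $|^e_e=\mathrm{id}$ and $(x|^e_f)|^f_g=x|^e_g$; $p(x)=e$ iff $x\in X_e$; global support: all $X_e\neq\emptyset$. Order: $x\le y$ iff $p(x)\le p(y)$ and $x=y|^{p(y)}_{p(x)}$. Compatibility $x\sim y$: $x\wedge y$ exists and $p(x\wedge y)=p(x)\wedge p(y)$. A Boolean set is a presheaf with global support over a Boolean algebra such that the order has least element $0$, compatible pairs have joins, and $p(x)=0\Rightarrow x=0$. *)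

From HB Require Import structures.
From mathcomp Require Import all_boot.
From mathcomp Require Import boolp classical_sets topology.
Set Implicit Arguments. Unset Strict Implicit. Unset Printing Implicit Defensive.
Local Open Scope classical_set_scope.

Definition boolean_space (X : topologicalType) : Prop :=
  hausdorff_space X /\
  (forall (U : set X) (x : X), open U -> U x ->
     exists B : set X, open B /\ compact B /\ B x /\ B `<=` U).

Definition local_homeomorphism (E X : topologicalType) (p : E -> X) : Prop :=
  forall e : E, exists U : set E,
    [/\ open U, U e, open (p @` U),
        {in U &, injective p} &
        {within U, continuous p}] /\
        (forall V : set E, open V -> V `<=` U -> open (p @` V)).

Definition etale_space (E X : topologicalType) (p : E -> X) : Prop :=
  (forall x : X, exists e : E, p e = x) /\ local_homeomorphism p.

Definition local_section (E X : topologicalType) (p : E -> X) (A : set E) : Prop :=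
  open A /\ {in A &, injective p}.

Definition compact_open_section (E X : topologicalType) (p : E -> X) (A : set E)
  : Prop := local_section p A /\ compact A.

Definition compact_open_subset (X : topologicalType) (A : set X) : Prop :=
  open A /\ compact A.

Section OrderDefs.
Variables (B : Type) (inB : B -> Prop) (le : B -> B -> Prop).

Definition is_partial_order : Prop :=
  [/\ (forall a, inB a -> le a a),
      (forall a b, inB a -> inB b -> le a b -> le b a -> a = b) &
      (forall a b c, inB a -> inB b -> inB c -> le a b -> le b c -> le a c)].

Definition is_meet (a b m : B) : Prop :=
  [/\ inB m, le m a, le m b &
      forall c, inB c -> le c a -> le c b -> le c m].

Definition is_join (a b j : B) : Prop :=
  [/\ inB j, le a j, le b j &
      forall c, inB c -> le a c -> le b c -> le j c].

Definition is_least (z : B) : Prop := inB z /\ forall a, inB a -> le z a.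

Definition generalized_boolean_algebra : Prop :=
  is_partial_order /\
  [/\ (forall a b, inB a -> inB b -> exists m, is_meet a b m),
      (forall a b, inB a -> inB b -> exists j, is_join a b j),
      (exists z, is_least z),
      (* distributivity: a /\ (b \/ c) = (a /\ b) \/ (a /\ c) *)
      (forall a b c bc abc ab ac r, inB a -> inB b -> inB c ->
         is_join b c bc -> is_meet a bc abc -> is_meet a b ab -> is_meet a c ac ->
         is_join ab ac r -> abc = r) &
      (* relative complements: for a <= x <= b there is y with
         x /\ y = a and x \/ y = b *)
      (forall a x b, inB a -> inB x -> inB b -> le a x -> le x b ->
         exists y, inB y /\ is_meet x y a /\ is_join x y b)].
End OrderDefs.

(* Presheaf data: elements are the t : T with inS t; the base is the set of
   b : B with inB b ordered by le; p t = e means t belongs to X_e (so the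
   X_e are pairwise disjoint); res e f t is the restriction t|^e_f. *)
Section Presheaf.
Variables (T B : Type) (inS : T -> Prop) (inB : B -> Prop) (le : B -> B -> Prop)
          (p : T -> B) (res : B -> B -> T -> T).

Definition is_presheaf : Prop :=
  [/\ (forall t, inS t -> inB (p t)),
      (forall e f t, inB e -> inB f -> le f e -> inS t -> p t = e ->
          inS (res e f t) /\ p (res e f t) = f),
      (forall e t, inB e -> inS t -> p t = e -> res e e t = t) &
      (forall e f g t, inB e -> inB f -> inB g -> le f e -> le g f ->
          inS t -> p t = e -> res f g (res e f t) = res e g t)].

Definition global_support : Prop :=
  forall e, inB e -> exists t, inS t /\ p t = e.

Definition elt_le (x y : T) : Prop := le (p x) (p y) /\ x = res (p y) (p x) y.

Definition compatible (x y : T) : Prop :=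
  exists m, is_meet inS elt_le x y m /\ is_meet inB le (p x) (p y) (p m).

Definition boolean_set : Prop :=
  [/\ generalized_boolean_algebra inB le,
      is_presheaf,
      global_support &
      exists z : T, [/\ is_least inS elt_le z,
        (forall x y, inS x -> inS y -> compatible x y ->
            exists j, is_join inS elt_le x y j) &
        (forall x, inS x -> is_least inB le (p x) -> x = z)]].
End Presheaf.

From mathcomp Require Import all_boot.
From mathcomp Require Import boolp classical_sets topology.
Set Implicit Arguments. Unset Strict Implicit. Unset Printing Implicit Defensive.
Local Open Scope classical_set_scope.

(* Compact-open subsets of a Hausdorff space are closed under union,
   intersection and difference, so they form a generalized Boolean algebra of
   sets.  An etale map is open and injective on a local section C, so a subset
   of C is compact as soon as its image is; hence compact-open sections
   restrict to any compact-open part of their image.  For sections the induced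
   order is inclusion, and two sections that agree over the overlap of their
   images glue to their union, which is their join.  Global support: every
   point has a compact-open neighbourhood carrying a section, sections over two
   compact-opens can be disjointified and glued, and compactness of a
   compact-open A turns this into a section over all of A. *)

Section SetLattice.
Variables (T : Type) (P : set (set T)).

Lemma setI_is_meet (a b : set T) :
  P (a `&` b) -> is_meet P (@subset T) a b (a `&` b).
Proof.
move=> Pab; split=> [//||| c _ ca cb y cy]; [exact: subIsetl|exact: subIsetr|].
by split; [exact: ca|exact: cb].
Qed.

Lemma is_meet_setI (a b m : set T) :
  P (a `&` b) -> is_meet P (@subset T) a b m -> m = a `&` b.
Proof.
move=> Pab [_ ma mb mgreatest]; apply/seteqP; split; last first.
  by apply: mgreatest; [|exact: subIsetl|exact: subIsetr].
by move=> y my; split; [exact: ma|exact: mb].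
Qed.

Lemma setU_is_join (a b : set T) :
  P (a `|` b) -> is_join P (@subset T) a b (a `|` b).
Proof.
move=> Pab; split=> [//||| c _ ac bc y]; [exact: subsetUl|exact: subsetUr|].
by case; [exact: ac|exact: bc].
Qed.

Lemma is_join_setU (a b j : set T) :
  P (a `|` b) -> is_join P (@subset T) a b j -> j = a `|` b.
Proof.
move=> Pab [_ aj bj jleast]; apply/seteqP; split.
  by apply: jleast; [|exact: subsetUl|exact: subsetUr].
by move=> y []; [exact: aj|exact: bj].
Qed.

Hypotheses (P0 : P set0)
  (PI : forall a b, P a -> P b -> P (a `&` b))
  (PU : forall a b, P a -> P b -> P (a `|` b))
  (PD : forall a b, P a -> P b -> P (a `\` b)).

Lemma sets_generalized_boolean_algebra :
  generalized_boolean_algebra P (@subset T).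
Proof.
split; first split.
- by move=> a _; exact: subset_refl.
- by move=> a b _ _ ab ba; rewrite eqEsubset.
- by move=> a b c _ _ _; exact: subset_trans.
split.
- by move=> a b Pa Pb; exists (a `&` b); apply: setI_is_meet; exact: PI.
- by move=> a b Pa Pb; exists (a `|` b); apply: setU_is_join; exact: PU.
- by exists set0; split=> // a _; exact: sub0set.
- move=> a b c bc abc ab ac r Pa Pb Pc jbc mabc mab mac jr.
  have ebc := is_join_setU (PU Pb Pc) jbc; rewrite {}ebc in mabc.
  have eab := is_meet_setI (PI Pa Pb) mab.
  have eac := is_meet_setI (PI Pa Pc) mac.
  rewrite (is_meet_setI (PI Pa (PU Pb Pc)) mabc) setIUr.
  by rewrite (is_join_setU _ jr) eab eac //; apply: PU; apply: PI.
- move=> a x b Pa Px Pb ax xb; exists (a `|` (b `\` x)).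
  have Py : P (a `|` (b `\` x)) by apply: PU => //; exact: PD.
  split=> //; split.
  + split=> //.
    move=> c _ cx cy z cz; case: (cy z cz) => // -[_ nxz].
    by case: nxz; exact: cx.
  + split=> //; first by move=> z [/ax/xb|[]].
    move=> c _ xc yc z bz; have [/xc //|nxz] := pselect (x z).
    by apply: yc; right.
Qed.

End SetLattice.

Section CompactOpenSubsets.
Variable X : topologicalType.

Lemma compact_open_subset0 : compact_open_subset (@set0 X).
Proof. by split; [exact: open0|exact: compact0]. Qed.

Lemma compact_open_subsetU (A B : set X) :
  compact_open_subset A -> compact_open_subset B -> compact_open_subset (A `|` B).
Proof. by move=> [oA cA] [oB cB]; split; [exact: openU|exact: compactU]. Qed.

Hypothesis hX : hausdorff_space X.

Lemma compact_open_subsetI (A B : set X) :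
  compact_open_subset A -> compact_open_subset B -> compact_open_subset (A `&` B).
Proof.
move=> [oA cA] [oB cB]; split; first exact: openI.
by apply: compact_closedI => //; exact: compact_closed.
Qed.

Lemma compact_open_subsetD (A B : set X) :
  compact_open_subset A -> compact_open_subset B -> compact_open_subset (A `\` B).
Proof.
move=> [oA cA] [oB cB]; split.
  by apply: openI => //; apply: closed_openC; exact: compact_closed.
by apply: compact_closedI => //; exact: open_closedC.
Qed.

Lemma compact_open_subsets_generalized_boolean_algebra :
  generalized_boolean_algebra (@compact_open_subset X) (@subset X).
Proof.
apply: sets_generalized_boolean_algebra.
- exact: compact_open_subset0.
- exact: compact_open_subsetI.
- exact: compact_open_subsetU.
- exact: compact_open_subsetD.
Qed.

End CompactOpenSubsets.

Lemma compact_covered_by_union_closed (T : topologicalType) (P : set (set T))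
    (A : set T) :
  compact A -> P set0 -> (forall G H, P G -> P H -> P (G `|` H)) ->
  (forall x, A x -> exists2 W, P W & nbhs x W) ->
  exists2 G, P G & A `<=` G.
Proof.
move=> cA P0 PU Pnbhs; apply: contrapT => noG.
pose F := filter_from P (fun G => A `\` G).
have FF : Filter F.
  apply: filter_from_filter; first by exists set0.
  move=> G H PG PH; exists (G `|` H); first exact: PU.
  by move=> y [Ay nGH]; split; split=> // ?; apply: nGH; [left|right].
have PF : ProperFilter F.
  apply: filter_from_proper => G PG; apply: contrapT => AG; apply: noG.
  by exists G => // y Ay; apply: contrapT => nGy; apply: AG; exists y.
have FA : F A by exists set0 => // y [].
have [x [Ax clx]] := cA F PF FA.
have [W PW Wx] := Pnbhs x Ax.
have FAW : F (A `\` W) by exists W.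
by have [y [[_ nWy] Wy]] := clx _ _ FAW Wx.
Qed.

Section EtaleSpace.
Variables (E X : topologicalType) (p : E -> X).
Hypothesis ep : etale_space p.

Local Notation img := (fun C : set E => p @` C).
Local Notation res := (fun (A B : set X) (C : set E) => C `&` p @^-1` B).

Lemma etale_continuous : continuous p.
Proof.
move=> e; have [U [[oU Ue _ _ cU] _]] := ep.2 e.
by move: cU; rewrite continuous_open_subspace // => /(_ e); apply; rewrite inE.
Qed.

Lemma etale_open_image (V : set E) : open V -> open (p @` V).
Proof.
move=> oV; pose U e := projT1 (cid (ep.2 e)).
have -> : p @` V = \bigcup_(e in V) p @` (V `&` U e).
  apply/seteqP; split=> [_ [e Ve <-]|_ [e _ [a [Va _] <-]]]; last by exists a.
  exists e => //; exists e => //; split=> //.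
  by rewrite /U; case: (cid (ep.2 e)) => ? [[]].
apply: bigcup_open => e _; rewrite /U.
case: (cid (ep.2 e)) => U' /= [[oU' _ _ _ _] openU'].
by apply: openU'; [exact: openI|exact: subIsetr].
Qed.

Lemma compact_of_compact_image (C K : set E) :
  local_section p C -> K `<=` C -> compact (p @` K) -> compact K.
Proof.
move=> [oC injC] KC cK F PF FK.
have [_ [[k Kk <-] clk]] := cK (p @ F) (fmap_proper_filter p PF)
  (filterS (fun a Ka => ex_intro2 _ _ a Ka erefl) FK).
exists k; split=> // S N FS; rewrite nbhsE => -[O [oO Ok] ON].
have FpSK : F (p @^-1` (p @` (S `&` K))).
  by apply: filterS (filterI FS FK) => a SKa; exists a.
have nbOC : nbhs (p k) (p @` (O `&` C)).
  apply: open_nbhs_nbhs; split; first by apply: etale_open_image; exact: openI.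
  by exists k => //; split=> //; exact: KC.
have [_ [[a [Sa Ka] <-] [b [Ob Cb] eab]]] := clk _ _ FpSK nbOC.
have ab : a = b by apply: injC; rewrite ?inE //; exact: KC.
by exists a; split=> //; apply: ON; rewrite ab.
Qed.

Lemma compact_open_section_image (C : set E) :
  compact_open_section p C -> compact_open_subset (p @` C).
Proof.
move=> [[oC _] cC]; split; first exact: etale_open_image.
apply: continuous_compact => //.
by apply: continuous_subspaceT; exact: etale_continuous.
Qed.

Lemma image_restrict (C : set E) (B : set X) :
  B `<=` p @` C -> p @` (C `&` p @^-1` B) = B.
Proof.
move=> BC; apply/seteqP; split=> [_ [a [_ Ba] <-] //|b Bb].
by have [a Ca pab] := BC _ Bb; exists a => //; split=> //=; rewrite pab.
Qed.

Lemma compact_open_section_restrict (C : set E) (B : set X) :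
  local_section p C -> compact_open_subset B -> B `<=` p @` C ->
  compact_open_section p (C `&` p @^-1` B).
Proof.
move=> [oC injC] [oB cB] BC; have sCB : local_section p (C `&` p @^-1` B).
  split; first by apply: openI => //; exact: (continuousP _).1 etale_continuous _ oB.
  by move=> a b; rewrite !inE => -[Ca _] [Cb _]; apply: injC; rewrite inE.
split=> //; apply: (compact_of_compact_image (conj oC injC) (@subIsetl _ _ _)).
by rewrite image_restrict.
Qed.

Lemma local_sectionU (C D : set E) :
  local_section p C -> local_section p D ->
  (forall a b, C a -> D b -> p a = p b -> a = b) -> local_section p (C `|` D).
Proof.
move=> [oC injC] [oD injD] agree; split; first exact: openU.
move=> a b; rewrite !inE => -[Ca|Da] [Cb|Db] e.
- by apply: injC; rewrite ?inE.
- exact: agree.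
- exact/esym/agree.
- by apply: injD; rewrite ?inE.
Qed.

Definition admits_section (A : set X) : Prop :=
  exists C, compact_open_section p C /\ p @` C = A.

Lemma compact_open_section0 : compact_open_section p set0.
Proof.
by split; [split; [exact: open0|by move=> ? ?; rewrite inE]|exact: compact0].
Qed.

Lemma admits_section0 : admits_section set0.
Proof. by exists set0; split; [exact: compact_open_section0|exact: image_set0]. Qed.

(* The second section is restricted to the part of its image missed by the
   first one, so the two pieces have disjoint images. *)
Lemma admits_sectionU (A B : set X) : hausdorff_space X ->
  admits_section A -> admits_section B -> admits_section (A `|` B).
Proof.
move=> hX [C [sC <-]] [D [sD <-]].
have cBA := compact_open_subsetD hX (compact_open_section_image sD)
  (compact_open_section_image sC).
have DCD : p @` D `\` p @` C `<=` p @` D by move=> y [].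
have sD' := compact_open_section_restrict sD.1 cBA DCD.
have imD' := image_restrict DCD.
exists (C `|` (D `&` p @^-1` (p @` D `\` p @` C))); split.
  split; last exact: compactU sC.2 sD'.2.
  apply: local_sectionU sC.1 sD'.1 _ => a b Ca [_ [_ nCb]] eab.
  by case: nCb; rewrite -eab; exists a.
rewrite image_setU imD'; apply/seteqP; split=> y; first by case=> [|[]]; [left|right].
by have [|nC []] := pselect ((p @` C) y); [left|right|right].
Qed.

Lemma admits_section_nbhs (A : set X) (x : X) : boolean_space X ->
  compact_open_subset A -> A x ->
  exists2 W, admits_section W /\ W `<=` A & nbhs x W.
Proof.
move=> [_ basis] [oA _] Ax; have [e pex] := ep.1 x; subst x.
have [U [[oU Ue opU injU _] _]] := ep.2 e.
have [W [oW [cW [We WUA]]]] := basis (p @` U `&` A) (p e) (openI opU oA)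
  (conj (ex_intro2 _ _ e Ue erefl) Ax).
exists W; last exact: open_nbhs_nbhs.
split; last by move=> y /WUA [].
exists (U `&` p @^-1` W); split; last by apply: image_restrict => y /WUA [].
by apply: compact_open_section_restrict => // y /WUA [].
Qed.

Lemma compact_open_subset_admits_section (A : set X) : boolean_space X ->
  compact_open_subset A -> admits_section A.
Proof.
move=> bX cA; pose P G := admits_section G /\ G `<=` A.
have P0 : P set0 by split; [exact: admits_section0|exact: sub0set].
have PU G H : P G -> P H -> P (G `|` H).
  move=> [sG GA] [sH HA]; split; first exact: admits_sectionU bX.1 sG sH.
  by rewrite subUset.
have [G [[C [sC eC]] GA] AG] := compact_covered_by_union_closed cA.2 P0 PU
  (fun x => admits_section_nbhs bX cA).
by exists C; split; rewrite // eC; apply/seteqP.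
Qed.

Lemma elt_le_sectionE {x y : set E} : {in y &, injective p} ->
  elt_le (@subset X) img res x y <-> x `<=` y.
Proof.
move=> injy; split=> [[_ ->]|xy]; first exact: subIsetl.
split; first exact: image_subset.
apply/seteqP; split=> [a xa|a [ya [b xb pba]]]; first by split; [exact: xy|exists a].
by have <- : b = a by apply: injy; rewrite ?inE //; exact: xy.
Qed.

Lemma compatible_sections_join (x y : set E) : hausdorff_space X ->
  compact_open_section p x -> compact_open_section p y ->
  compatible (compact_open_section p) (@compact_open_subset X) (@subset X)
    img res x y ->
  exists j, is_join (compact_open_section p) (elt_le (@subset X) img res) x y j.
Proof.
move=> hX sx sy [m [[_ mx my _] pm_meet]].
move/(elt_le_sectionE sx.1.2): mx => mx; move/(elt_le_sectionE sy.1.2): my => my.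
have pm : p @` m = p @` x `&` p @` y.
  apply: is_meet_setI pm_meet; apply: compact_open_subsetI => //;
  exact: compact_open_section_image.
have agree a b : x a -> y b -> p a = p b -> a = b.
  move=> xa yb eab; have [c mc pca] : (p @` m) (p a).
    by rewrite pm; split; [exists a|exists b].
  have -> : a = c by apply: sx.1.2; rewrite ?inE //; exact: mx.
  by apply: sy.1.2; rewrite ?inE //; [exact: my|rewrite pca].
have sxy : compact_open_section p (x `|` y).
  by split; [exact: local_sectionU sx.1 sy.1 agree|exact: compactU sx.2 sy.2].
exists (x `|` y); split=> //.
- by apply/(elt_le_sectionE sxy.1.2); exact: subsetUl.
- by apply/(elt_le_sectionE sxy.1.2); exact: subsetUr.
- move=> c sc /(elt_le_sectionE sc.1.2) xc /(elt_le_sectionE sc.1.2) yc.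
  by apply/(elt_le_sectionE sc.1.2); rewrite subUset.
Qed.

Lemma compact_open_sections_presheaf :
  is_presheaf (compact_open_section p) (@compact_open_subset X) (@subset X)
    img res.
Proof.
split.
- by move=> C; exact: compact_open_section_image.
- move=> A B C _ cB BC sC pCA; subst A; split; last exact: image_restrict.
  exact: compact_open_section_restrict sC.1 cB BC.
- by move=> A C _ _ pCA; subst A; apply/setIidl; exact: preimage_image.
- move=> A B B' C _ _ _ _ B'B _ _ /=.
  by rewrite -setIA -preimage_setI (setIidr B'B).
Qed.

End EtaleSpace.

Theorem proposition3p1 (E X : topologicalType) (p : E -> X) :
  boolean_space X -> etale_space p ->
  boolean_set (compact_open_section p) (@compact_open_subset X) (@subset X)
    (fun C : set E => p @` C)
    (fun (A B : set X) (C : set E) => C `&` p @^-1` B).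
Proof.
move=> bX ep; have hX := bX.1.
split.
- exact: compact_open_subsets_generalized_boolean_algebra hX.
- exact: compact_open_sections_presheaf ep.
- by move=> A; exact: compact_open_subset_admits_section ep A bX.
- exists set0; split.
  + split=> [|C sC]; first exact: compact_open_section0.
    by apply/(elt_le_sectionE sC.1.2); exact: sub0set.
  + by move=> x y sx sy; exact: compatible_sections_join ep x y hX sx sy.
  + move=> C _ [_ /(_ _ (compact_open_subset0 X)) pC0].
    by apply/seteqP; split=> // e Ce; have [] := pC0 (p e) (ex_intro2 _ _ e Ce erefl).
Qed.
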